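(* Let $G$ be a central product of finite groups $H$ and $K$. Then the $c$-dimension of $G$ is at least the sum of the $c$-dimensions of $H$ and $K$.
   Context: The $c$-dimension of a group $G$ is the maximal length $k$ of a chain of nested centralizers $C_G(Y_0)<C_G(Y_1)<\dots<C_G(Y_k)$ (strict inclusions) of subsets $Y_i\subseteq G$. A group $G$ is a central product of $H$ and $K$ if $G=HK$ where $H,K$ are subgroups of $G$ with $[H,K]=1$ (equivalently, $G$ is a quotient of $H\times K$ by a central subgroup intersecting $H$ and $K$ trivially, and $H,K$ are identified with their images). *)

From mathcomp Require Import all_boot all_order all_fingroup all_solvable.
Set Implicit Arguments. Unset Strict Implicit. Unset Printing Implicit Defensive.

Local Open Scope group_scope.

Definition centralizers (gT : finGroupType) (G : {set gT}) : {set {set gT}} :=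
  [set 'C_G(Y) | Y in powerset G].

Definition is_cchain (gT : finGroupType) (G : {set gT}) k
    (t : k.+1.-tuple {set gT}) : bool :=
  all (fun A => A \in centralizers G) t &&
  sorted (fun A B : {set gT} => A \proper B) t.

(* A strict chain of
   subsets of G has at most #|G|+1 members, so k <= #|G| and the maximum over
   k < #|G|.+1 is the maximum over all chains (k = 0 always occurs). *)
Definition cdim (gT : finGroupType) (G : {set gT}) : nat :=
  \max_(k < #|G|.+1 | [exists t : k.+1.-tuple {set gT}, is_cchain G t]) k.

From mathcomp Require Import all_boot all_order all_fingroup all_solvable.
Set Implicit Arguments. Unset Strict Implicit. Unset Printing Implicit Defensive.

(* Let G = H K with [H, K] = 1.  For centralizers A of H and B of K put
   f A B = C_G(C_H(A) U C_K(B)).  It is a centralizer of G, monotone in both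
   arguments, and f A B meets H in C_H(C_H(A)) = A and K in B.  Hence a strict
   chain A_0 < ... < A_m in H followed by a strict chain B_0 < ... < B_n in K
   gives the strict chain
     f A_0 B_0 < ... < f A_m B_0 < f A_m B_1 < ... < f A_m B_n
   of length m + n in G. *)

Local Open Scope group_scope.

Section CentralizerChains.

Variable gT : finGroupType.
Implicit Types (G H K : {group gT}) (A B : {set gT}).

Local Notation proper_rel := (fun C D : {set gT} => C \proper D).

Lemma path_proper_card A s :
  path proper_rel A s -> (#|A| + size s <= #|last A s|)%N.
Proof.
elim: s A => [|B s IHs] A /=; first by rewrite addn0.
case/andP=> /proper_card ltAB /IHs; apply: leq_trans.
by rewrite addnS -addSn leq_add2r.
Qed.

Lemma centralizers_sub G A : A \in centralizers G -> A \subset G.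
Proof. by case/imsetP=> Y _ ->; apply: subsetIl. Qed.

Lemma centralizers_self G : (G : {set gT}) \in centralizers G.
Proof.
apply/imsetP; exists set0; first by rewrite inE sub0set.
by apply/esym/setIidPl; rewrite centsC sub0set.
Qed.

Lemma dcent_centralizers H A : A \in centralizers H -> 'C_H('C_H(A)) = A.
Proof.
case/imsetP=> Y; rewrite inE => sYH ->.
apply/eqP; rewrite eqEsubset; apply/andP; split.
  by apply/setIS/centS; rewrite subsetI sYH centsC subsetIr.
by rewrite subsetI subsetIl centsC subsetIr.
Qed.

Lemma leq_cdim G A s :
    all (mem (centralizers G)) (A :: s) -> path proper_rel A s ->
  (size s <= cdim G)%N.
Proof.
move=> centAs chainAs.
have s_last_G : last A s \subset G.
  by apply/centralizers_sub/(allP centAs)/mem_last.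
have lt_s_G : (size s < #|G|.+1)%N.
  rewrite ltnS (leq_trans (leq_addl #|A| _)) //.
  by rewrite (leq_trans (path_proper_card chainAs)) // subset_leq_card.
have sz_As : size (A :: s) == (size s).+1 by [].
apply: (leq_bigmax_cond (Ordinal lt_s_G)).
by apply/existsP; exists (Tuple sz_As); apply/andP.
Qed.

Lemma cdim_chain G :
  exists A s, [/\ all (mem (centralizers G)) (A :: s), path proper_rel A s
                & size s = cdim G].
Proof.
pose P (k : 'I_#|G|.+1) := [exists t : k.+1.-tuple {set gT}, is_cchain G t].
have P_gt0 : (0 < #|P|)%N.
  apply/card_gt0P; exists ord0; apply/existsP; exists [tuple (G : {set gT})].
  by rewrite /is_cchain /= centralizers_self.
rewrite /cdim; have [k Pk ->] := eq_bigmax_cond (nat_of_ord (n := _)) P_gt0.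
case/existsP: Pk => -[t sz_t] /andP[centAs chainAs].
by case: t sz_t centAs chainAs => [|A s] //= /eqP[<-]; exists A, s.
Qed.

Lemma path_proper_map (P : pred {set gT}) (f g : {set gT} -> {set gT}) A s :
    {homo f : C D / C \subset D} -> {in P, cancel f g} ->
    all P (A :: s) -> path proper_rel A s -> path proper_rel (f A) (map f s).
Proof.
move=> homo_f fK PAs chainAs; rewrite path_map; apply: sub_in_path PAs chainAs.
move=> C D PC PD /=; rewrite !properEneq => /andP[neCD sCD].
rewrite homo_f // andbT; apply: contra neCD => /eqP eq_fCD.
by rewrite -(fK C PC) -(fK D PD) eq_fCD.
Qed.

Definition cprod_cent G H K A B := 'C_G('C_H(A) :|: 'C_K(B)).

Lemma cprod_centC G H K A B : cprod_cent G H K A B = cprod_cent G K H B A.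
Proof. by rewrite /cprod_cent setUC. Qed.

Lemma cprod_centS G H K A A' B B' :
    A \subset A' -> B \subset B' ->
  cprod_cent G H K A B \subset cprod_cent G H K A' B'.
Proof. by move=> sAA' sBB'; apply/setIS/centS/setUSS; apply/setIS/centS. Qed.

Lemma cprod_cent_centralizers G H K A B :
  H \subset G -> K \subset G -> cprod_cent G H K A B \in centralizers G.
Proof.
move=> sHG sKG; apply/imsetP; exists ('C_H(A) :|: 'C_K(B)) => //.
by rewrite inE subUset !(subset_trans (subsetIl _ _)).
Qed.

Lemma cprod_centIl G H K A B :
  H \subset G -> K \subset 'C(H) -> A \in centralizers H ->
  cprod_cent G H K A B :&: H = A.
Proof.
move=> sHG cHK centA; rewrite -{2}(dcent_centralizers centA) /cprod_cent centU.
have cHCK : H \subset 'C('C_K(B)) by rewrite centsC (subset_trans (subsetIl _ _)).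
apply/setP => x; rewrite !inE; case Hx: (x \in H); last by rewrite !andbF.
by rewrite (subsetP sHG _ Hx) (subsetP cHCK _ Hx) !andbT.
Qed.

Lemma cprod_centIr G H K A B :
  K \subset G -> K \subset 'C(H) -> B \in centralizers K ->
  cprod_cent G H K A B :&: K = B.
Proof. by rewrite cprod_centC centsC; apply: cprod_centIl. Qed.

End CentralizerChains.

Theorem lemma4 (gT : finGroupType) (G H K : {group gT}) :
  H \* K = G -> (cdim H + cdim K <= cdim G)%N.
Proof.
case/cprodP=> _ defG cHK.
have sHG : H \subset G by rewrite -defG mulG_subl.
have sKG : K \subset G by rewrite -defG mulG_subr.
have [A0 [sA [centAs chainAs <-]]] := cdim_chain H.
have [B0 [sB [centBs chainBs <-]]] := cdim_chain K.
pose f := cprod_cent G H K; pose Am := last A0 sA.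
have centf C D : f C D \in centralizers G by apply: cprod_cent_centralizers.
rewrite -(size_map (f^~ B0)) -(size_map (f Am)) -size_cat.
apply: (@leq_cdim _ _ (f A0 B0)).
  rewrite /= all_cat !all_map centf; apply/and3P.
  by split => //; apply/allP => C _; apply: centf.
rewrite cat_path (last_map (f^~ B0)); apply/andP; split.
  apply: (path_proper_map (P := mem (centralizers H)) (f := f^~ B0)
                          (g := fun C => C :&: H)) => //.
    by move=> C D sCD; apply: cprod_centS.
  by move=> C; apply: cprod_centIl.
apply: (path_proper_map (P := mem (centralizers K)) (f := f Am)
                        (g := fun C => C :&: K)) => //.
  by move=> C D sCD; apply: cprod_centS.
by move=> D; apply: cprod_centIr.
Qed.
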